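(* For any two systems $\mathfrak T_1$ and $\mathfrak T_2$, if $\mathfrak T_1\sim_{hpb}\mathfrak T_2$ then $\mathfrak T_1\sim_{\mathrm{c}\mu}\mathfrak T_2$.
   Context: A system (transition system with independence) is $\mathfrak T=(S,s_0,T,I,\Sigma)$: $S$ states, $s_0\in S$, $\Sigma$ labels, $T\subseteq S\times\Sigma\times S$, $I\subseteq T\times T$ irreflexive symmetric; for $t=(s,a,s')$, $\sigma(t)=s,\tau(t)=s',\delta(t)=a$. With $(s,a,s_1)\prec(s_2,a,q)$ iff $\exists b$: $(s,a,s_1)I(s,b,s_2)$, $(s,a,s_1)I(s_1,b,q)$, $(s,b,s_2)I(s_2,a,q)$, and $\sim$ the equivalence closure of $\prec$, the axioms are: (A1) $(s,a,s_1)\sim(s,a,s_2)\Rightarrow s_1=s_2$; (A2) $(s,a,s_1)I(s,b,s_2)\Rightarrow\exists q.\,(s,a,s_1)I(s_1,b,q)\wedge(s,b,s_2)I(s_2,a,q)$; (A3) $(s,a,s_1)I(s_1,b,q)\Rightarrow\exists s_2.\,(s,a,s_1)I(s,b,s_2)\wedge(s,b,s_2)I(s_2,a,q)$; (A4) $t\sim t'\Rightarrow\{u:tIu\}=\{u:t'Iu\}$. Systems are image-finite. Relations: $t\otimes t'$ iff $\sigma(t)=\sigma(t')\wedge tIt'$; $t\ominus t'$ iff $\tau(t)=\sigma(t')\wedge tIt'$; $t\le t'$ iff $\tau(t)=\sigma(t')\wedge\neg tIt'$. $\mathfrak X(s)$ = transitions with source $s$; a conflict-free set is a set of transitions with common source,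 pairwise $\otimes$; support sets are the $\mathfrak X(s)$ and the non-empty conflict-free sets; $M\sqsubseteq R$ iff $M\subseteq R$ and no $t\in R\setminus M$ has $t\otimes t'$ for all $t'\in M$; $\mathcal X$ = all $\mathfrak X(s)$ and all support sets $M\sqsubseteq\mathfrak X(s)$. $\mathfrak A=T\cup\{t_\epsilon\}$ with fresh $t_\epsilon$, $\tau(t_\epsilon)=s_0$, $t_\epsilon\le t$ whenever $\sigma(t)=s_0$, never $t_\epsilon\ominus t$. Processes: $\mathfrak S=\mathcal X\times\mathfrak A$; initial process $(\mathfrak X(s_0),t_\epsilon)$. $\sim_{\mathrm{c}\mu}$: systems are equivalent iff their initial processes satisfy the same closed fixpoint-free formulas $\phi::=\mathrm{tt}\mid\neg\phi\mid\phi\wedge\phi\mid\langle a\rangle_c\phi\mid\langle a\rangle_{nc}\phi$, with $[\![\mathrm{tt}]\!]=\mathfrak S$, complement, intersection, $[\![\langle a\rangle_c\phi]\!]=\{(R,t):\exists r\in R.\ \delta(r)=a,\ t\le r,\ (\mathfrak X(\tau(r)),r)\in[\![\phi]\!]\}$, and $\langle a\rangle_{nc}$ likewise with $t\ominus r$. $\sim_{hpb}$: runs are finite sequences $[t_1,\dots,t_k]$ with $\sigma(t_1)=s_0$, $\sigma(t_{i+1})=\tau(t_i)$; $\varrho(\pi)$ is the last transition (empty run $\epsilon$ ends at $s_0$ and its ''last transition'' is independent of nothing). The labelled poset of a run: elements $1..k$ labelled $\delta(t_i)$, order the reflexive-transitive closure of $\{(i,j):i<j,\neg t_iIt_j\}$.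 $(\pi_1.u,\pi_2.v)$ is synchronous iff $(\varrho(\pi_1),u)\in I_1\Leftrightarrow(\varrho(\pi_2),v)\in I_2$ and the labelled posets of $\pi_1.u,\pi_2.v$ are isomorphic. hpb game from $(\epsilon,\epsilon)$: Adam picks a system and a transition $u$ from the end state of the current run there; Eve answers with an equally labelled transition $v$ from the end state of the current run in the other system so that the extended pair is synchronous; a player who cannot move loses, infinite plays are won by Eve. $\mathfrak T_1\sim_{hpb}\mathfrak T_2$ iff Eve has a winning strategy. *)

From Stdlib Require Import List Relations.
Import ListNotations.

Section Defs.
Variable L : Type.

Record raw := Raw {
  St : Type;
  s0 : St;
  tr : St -> L -> St -> Prop;
  ind : St * L * St -> St * L * St -> Prop
}.

Definition trans (T : raw) := (St T * L * St T)%type.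
Definition src {T : raw} (t : trans T) : St T := fst (fst t).
Definition lab {T : raw} (t : trans T) : L := snd (fst t).
Definition tgt {T : raw} (t : trans T) : St T := snd t.
Definition inT (T : raw) (t : trans T) : Prop := tr T (src t) (lab t) (tgt t).

Definition prec (T : raw) (t u : trans T) : Prop :=
  lab t = lab u /\
  exists b : L,
    ind T t (src t, b, src u) /\
    ind T t (tgt t, b, tgt u) /\
    ind T (src t, b, src u) (src u, lab t, tgt u).

Definition sim (T : raw) : relation (trans T) := clos_refl_sym_trans _ (prec T).

Definition is_system (T : raw) : Prop :=
  (forall t u, ind T t u -> inT T t /\ inT T u) /\
  (forall t, ~ ind T t t) /\
  (forall t u, ind T t u -> ind T u t) /\
  (forall s a s1 s2, sim T (s, a, s1) (s, a, s2) -> s1 = s2) /\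
  (forall s a b s1 s2, ind T (s, a, s1) (s, b, s2) ->
     exists q, ind T (s, a, s1) (s1, b, q) /\ ind T (s, b, s2) (s2, a, q)) /\
  (forall s a b s1 q, ind T (s, a, s1) (s1, b, q) ->
     exists s2, ind T (s, a, s1) (s, b, s2) /\ ind T (s, b, s2) (s2, a, q)) /\
  (forall t t', sim T t t' -> forall u, ind T t u <-> ind T t' u) /\
  (forall s, exists l : list (L * St T), forall a s', tr T s a s' -> In (a, s') l).

Inductive form : Type :=
| ftt : form
| fneg : form -> form
| fand : form -> form -> form
| fdia_c : L -> form -> form
| fdia_nc : L -> form -> form.

Definition Xs (T : raw) (s : St T) : trans T -> Prop :=
  fun u => inT T u /\ src u = s.

(* Elements of A = T + {t_eps}: [None] is t_eps (tau(t_eps) = s0). *)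
Definition le_A (T : raw) (t : option (trans T)) (r : trans T) : Prop :=
  match t with
  | None => src r = s0 T
  | Some t => tgt t = src r /\ ~ ind T t r
  end.

Definition ominus_A (T : raw) (t : option (trans T)) (r : trans T) : Prop :=
  match t with
  | None => False
  | Some t => tgt t = src r /\ ind T t r
  end.

Fixpoint sat (T : raw) (R : trans T -> Prop) (t : option (trans T)) (f : form)
  : Prop :=
  match f with
  | ftt => True
  | fneg g => ~ sat T R t g
  | fand g h => sat T R t g /\ sat T R t h
  | fdia_c a g => exists r, R r /\ inT T r /\ lab r = a /\ le_A T t r /\
                   sat T (Xs T (tgt r)) (Some r) g
  | fdia_nc a g => exists r, R r /\ inT T r /\ lab r = a /\ ominus_A T t r /\
                   sat T (Xs T (tgt r)) (Some r) g
  end.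

Definition cmu_equiv (T1 T2 : raw) : Prop :=
  forall f : form, sat T1 (Xs T1 (s0 T1)) None f <-> sat T2 (Xs T2 (s0 T2)) None f.

(* runs are lists [t1; ...; tk] in chronological order *)
Definition endst (T : raw) (p : list (trans T)) : St T :=
  match rev p with nil => s0 T | t :: _ => tgt t end.

Definition indlast (T : raw) (p : list (trans T)) (u : trans T) : Prop :=
  match rev p with nil => False | t :: _ => ind T t u end.

(* order of the labelled poset of a run (positions 0..k-1) *)
Definition pstep (T : raw) (p : list (trans T)) (i j : nat) : Prop :=
  exists ti tj, i < j /\ j < length p /\ nth_error p i = Some ti /\
                nth_error p j = Some tj /\ ~ ind T ti tj.

Definition pord (T : raw) (p : list (trans T)) : relation nat :=
  clos_refl_trans _ (pstep T p).

Definition plab (T : raw) (p : list (trans T)) (i : nat) : option L :=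
  option_map (@lab T) (nth_error p i).

Definition lp_iso (T1 T2 : raw) (p1 : list (trans T1)) (p2 : list (trans T2)) : Prop :=
  length p1 = length p2 /\
  exists f g : nat -> nat,
    (forall i, i < length p1 -> f i < length p2 /\ g (f i) = i) /\
    (forall j, j < length p2 -> g j < length p1 /\ f (g j) = j) /\
    (forall i, i < length p1 -> plab T2 p2 (f i) = plab T1 p1 i) /\
    (forall i j, i < length p1 -> j < length p1 ->
       (pord T1 p1 i j <-> pord T2 p2 (f i) (f j))).

Definition sync (T1 T2 : raw) (p1 : list (trans T1)) (u : trans T1)
  (p2 : list (trans T2)) (v : trans T2) : Prop :=
  (indlast T1 p1 u <-> indlast T2 p2 v) /\ lp_iso T1 T2 (p1 ++ [u]) (p2 ++ [v]).

(* A set W of positions (pairs of runs) from which Eve can always answer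
   every Adam move and stay in W: Eve's winning region invariant.  *)
Definition hpb_invariant (T1 T2 : raw)
  (W : list (trans T1) -> list (trans T2) -> Prop) : Prop :=
  forall p1 p2, W p1 p2 ->
    (forall u, inT T1 u -> src u = endst T1 p1 ->
       exists v, inT T2 v /\ src v = endst T2 p2 /\ lab v = lab u /\
                 sync T1 T2 p1 u p2 v /\ W (p1 ++ [u]) (p2 ++ [v])) /\
    (forall v, inT T2 v -> src v = endst T2 p2 ->
       exists u, inT T1 u /\ src u = endst T1 p1 /\ lab u = lab v /\
                 sync T1 T2 p1 u p2 v /\ W (p1 ++ [u]) (p2 ++ [v])).

Definition hpb_equiv (T1 T2 : raw) : Prop :=
  exists W, W nil nil /\ hpb_invariant T1 T2 W.

End Defs.

Arguments is_system {L} T.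
Arguments hpb_equiv {L} T1 T2.
Arguments cmu_equiv {L} T1 T2.

(* Satisfaction is invariant along Eve's winning region, by induction on the
   formula.  If a diamond is witnessed by [r], Adam plays [r]; Eve's answer has
   the same label and, by synchrony, is independent of the last transition of
   her run exactly when [r] is independent of the last transition of Adam's, so
   it witnesses the same (causal or non-causal) diamond, and the continuation
   is again a winning position. *)
From Stdlib Require Import List.
Import ListNotations.

#[local] Arguments trans {L} T.
#[local] Arguments src {L T} t.
#[local] Arguments tgt {L T} t.
#[local] Arguments lab {L T} t.
#[local] Arguments inT {L} T t.
#[local] Arguments endst {L} T p.
#[local] Arguments indlast {L} T p u.
#[local] Arguments le_A {L} T t r.
#[local] Arguments ominus_A {L} T t r.
#[local] Arguments sat {L} T R t f.
#[local] Arguments Xs {L} T s _.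
#[local] Arguments fdia_c {L} _ _.
#[local] Arguments fdia_nc {L} _ _.
#[local] Arguments hpb_invariant {L} T1 T2 W.

Section Runs.
Variables (L : Type) (T : raw L).

(* [None] plays the role of [t_eps], the last transition of the empty run. *)
Definition lastopt (p : list (trans T)) : option (trans T) :=
  match rev p with nil => None | t :: _ => Some t end.

Definition sat_run (p : list (trans T)) (f : form L) : Prop :=
  sat T (Xs T (endst T p)) (lastopt p) f.

Lemma sat_run_snoc p u f :
  sat_run (p ++ [u]) f <-> sat T (Xs T (tgt u)) (Some u) f.
Proof. now unfold sat_run, endst, lastopt; rewrite rev_unit. Qed.

Lemma le_A_lastopt p r :
  le_A T (lastopt p) r <-> src r = endst T p /\ ~ indlast T p r.
Proof. unfold le_A, lastopt, endst, indlast; destruct (rev p); simpl; intuition. Qed.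

Lemma ominus_A_lastopt p r :
  ominus_A T (lastopt p) r <-> src r = endst T p /\ indlast T p r.
Proof. unfold ominus_A, lastopt, endst, indlast; destruct (rev p); simpl; intuition. Qed.

End Runs.

#[local] Arguments lastopt {L} T p.
#[local] Arguments sat_run {L} T p f.
#[local] Arguments sat_run_snoc {L T} p u f.

Section DiamondTransfer.
Variables (L : Type) (T T' : raw L) (p : list (trans T)) (p' : list (trans T')).
Variable Q : trans T -> trans T' -> Prop.

Hypothesis answer : forall u, inT T u -> src u = endst T p ->
  exists v, inT T' v /\ src v = endst T' p' /\ lab v = lab u /\
            (indlast T p u <-> indlast T' p' v) /\ Q u v.

Variable g : form L.
Hypothesis continuation : forall u v, Q u v ->
  sat T (Xs T (tgt u)) (Some u) g -> sat T' (Xs T' (tgt v)) (Some v) g.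

Lemma sat_run_dia_c_transfer (a : L) :
  sat_run T p (fdia_c a g) -> sat_run T' p' (fdia_c a g).
Proof.
  intros [r [[Hr _] [_ [<- [Hle Hg]]]]].
  apply le_A_lastopt in Hle as [Hsrc Hnind].
  destruct (answer r Hr Hsrc) as [v [Hv [Hsv [Hlab [Hind HQ]]]]].
  exists v; repeat split; auto.
  - apply le_A_lastopt; split; [exact Hsv | now rewrite <- Hind].
  - exact (continuation r v HQ Hg).
Qed.

Lemma sat_run_dia_nc_transfer (a : L) :
  sat_run T p (fdia_nc a g) -> sat_run T' p' (fdia_nc a g).
Proof.
  intros [r [[Hr _] [_ [<- [Hom Hg]]]]].
  apply ominus_A_lastopt in Hom as [Hsrc Hind0].
  destruct (answer r Hr Hsrc) as [v [Hv [Hsv [Hlab [Hind HQ]]]]].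
  exists v; repeat split; auto.
  - apply ominus_A_lastopt; split; [exact Hsv | now apply Hind].
  - exact (continuation r v HQ Hg).
Qed.

End DiamondTransfer.

Section WinningRegion.
Variables (L : Type) (T1 T2 : raw L).
Variable W : list (trans T1) -> list (trans T2) -> Prop.
Hypothesis HW : hpb_invariant T1 T2 W.

Lemma hpb_answer_forth {p1 p2} : W p1 p2 ->
  forall u, inT T1 u -> src u = endst T1 p1 ->
  exists v, inT T2 v /\ src v = endst T2 p2 /\ lab v = lab u /\
            (indlast T1 p1 u <-> indlast T2 p2 v) /\ W (p1 ++ [u]) (p2 ++ [v]).
Proof.
  intros Hp u Hu Hsu.
  destruct (proj1 (HW p1 p2 Hp) u Hu Hsu) as [v [Hv [Hsv [Hlab [[Hind _] HW']]]]].
  now exists v.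
Qed.

Lemma hpb_answer_back {p1 p2} : W p1 p2 ->
  forall v, inT T2 v -> src v = endst T2 p2 ->
  exists u, inT T1 u /\ src u = endst T1 p1 /\ lab u = lab v /\
            (indlast T2 p2 v <-> indlast T1 p1 u) /\ W (p1 ++ [u]) (p2 ++ [v]).
Proof.
  intros Hp v Hv Hsv.
  destruct (proj2 (HW p1 p2 Hp) v Hv Hsv) as [u [Hu [Hsu [Hlab [[Hind _] HW']]]]].
  exists u; repeat split; auto; apply Hind.
Qed.

Lemma sat_run_winning f : forall p1 p2, W p1 p2 ->
  (sat_run T1 p1 f <-> sat_run T2 p2 f).
Proof.
  induction f as [| g IH | g IHg h IHh | a g IH | a g IH]; intros p1 p2 Hp.
  - reflexivity.
  - exact (not_iff_compat (IH p1 p2 Hp)).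
  - change (sat_run T1 p1 g /\ sat_run T1 p1 h <-> sat_run T2 p2 g /\ sat_run T2 p2 h).
    now rewrite (IHg p1 p2 Hp), (IHh p1 p2 Hp).
  - split.
    + apply sat_run_dia_c_transfer with (1 := hpb_answer_forth Hp).
      intros u v HW' Hu; apply (sat_run_snoc p2), (IH _ _ HW'), sat_run_snoc, Hu.
    + apply sat_run_dia_c_transfer with (1 := hpb_answer_back Hp).
      intros v u HW' Hv; apply (sat_run_snoc p1), (IH _ _ HW'), sat_run_snoc, Hv.
  - split.
    + apply sat_run_dia_nc_transfer with (1 := hpb_answer_forth Hp).
      intros u v HW' Hu; apply (sat_run_snoc p2), (IH _ _ HW'), sat_run_snoc, Hu.
    + apply sat_run_dia_nc_transfer with (1 := hpb_answer_back Hp).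
      intros v u HW' Hv; apply (sat_run_snoc p1), (IH _ _ HW'), sat_run_snoc, Hv.
Qed.

End WinningRegion.

#[local] Arguments sat_run_winning {L T1 T2 W} HW f p1 p2 _.

Theorem lemma1 (L : Type) (T1 T2 : raw L) :
  is_system T1 -> is_system T2 -> hpb_equiv T1 T2 -> cmu_equiv T1 T2.
Proof.
  intros _ _ [W [Wnil HW]] f.
  exact (sat_run_winning HW f [] [] Wnil).
Qed.
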